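(* Let $N$ be a Petri net, let $\epsilon_N : \mathcal{F}_B(N)\to\mathcal{F}(N)$ be the strict monoidal functor sending each $\overrightarrow{A}$ to $A$, each $\overleftarrow{A}$ to the monoidal unit and each generating morphism $u$ to $u$, and let $N^\sharp := \Gamma\epsilon_N : \mathcal{F}(N)\to\mathbf{Span}$. Then $\mathcal{F}_B(N)$ is isomorphic to the category $\int N^\sharp$ obtained as the pullback in $\mathbf{Cat}$ of $U : \mathbf{Span}_\bullet\to\mathbf{Span}$ along $N^\sharp$; explicitly, $\int N^\sharp$ has as objects the pairs $(X,x)$ with $X$ an object of $\mathcal{F}(N)$ and $x\in N^\sharp X$, and as morphisms $(X,x)\to(Y,y)$ the pairs $(f,\sigma)$ with $f : X\to Y$ a morphism of $\mathcal{F}(N)$ and $\sigma$ an element of the tip of the span $N^\sharp f$ whose images under the two legs are $x$ and $y$ respectively.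
   Context: A Petri net $N$ is a pair of functions $s,t : T\to\mathcal{M}(S)$ with $\mathcal{M}(S)$ the set of finite multisets over the set of places $S$. $\mathcal{F}(N)$ is the free symmetric strict monoidal category with objects the strings over $S$ (product = concatenation) and morphisms freely generated, with identities and symmetries, by one generator $u : su\to tu$ per $u\in T$ (with $su,tu$ orderings of $s(u),t(u)$). $\mathcal{F}_B(N)$ is the free symmetric strict monoidal category with two object generators $\overrightarrow{A}$, $\overleftarrow{A}$ per place $A$ and, for each generator $u : \bigotimes_{i=1}^n A_i\to\bigotimes_{j=1}^m B_j$ of $\mathcal{F}(N)$, a generator $u : \bigotimes_{i=1}^{\max(m,n)}(\overrightarrow{A_i}\otimes\overleftarrow{B_i})\to\bigotimes_{i=1}^{\max(m,n)}(\overleftarrow{A_i}\otimes\overrightarrow{B_i})$ (missing factors being the unit). $\mathbf{Span}$ is the bicategory of sets, spans and span morphisms; $\mathbf{Span}_\bullet$ is the bicategory of spans between pointed sets, and $U$ the forgetful functor. For a functor $F : \mathcal{D}\to\mathcal{C}$ of 1-categories, $\Gamma F : \mathcal{C}\to\mathbf{Span}$ ($\mathcal{C}$ regarded as locally discrete) is the lax functor sending $C$ to $\{D : FD=C\}$ and $f : C\to C'$ to the span $\{D : FD=C\}\xleftarrow{\mathrm{dom}}\{g\in\mathcal{D} : Fg=f\}\xrightarrow{\mathrm{cod}}\{D: FD=C'\}$. *)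

(* Free symmetric strict monoidal categories presented by
   terms modulo the symmetric strict monoidal category axioms. *)
From Stdlib Require Import List.
Import ListNotations.
Set Implicit Arguments.

(* Categories (hom-setoids: heq is equality of morphisms) and isomorphism *)

Record PreCat := {
  ob  : Type;
  hom : ob -> ob -> Type;
  heq : forall a b, hom a b -> hom a b -> Prop;
  idm : forall a, hom a a;
  cmp : forall a b c, hom a b -> hom b c -> hom a c }.
Arguments heq {_ _ _} _ _.
Arguments idm {_} _.
Arguments cmp {_ _ _ _} _ _.

Record Functor (C D : PreCat) := {
  fob  : ob C -> ob D;
  fhom : forall a b, hom C a b -> hom D (fob a) (fob b);
  f_resp : forall a b (f g : hom C a b), heq f g -> heq (fhom _ _ f) (fhom _ _ g);
  f_id   : forall a, heq (fhom _ _ (idm a)) (idm (fob a));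
  f_comp : forall a b c (f : hom C a b) (g : hom C b c),
      heq (fhom _ _ (cmp f g)) (cmp (fhom _ _ f) (fhom _ _ g)) }.
Arguments fob {_ _} _ _.
Arguments fhom {_ _} _ {_ _} _.

Definition CatIso (C D : PreCat) : Prop :=
  exists F : Functor C D,
    (forall d : ob D, exists! c : ob C, fob F c = d) /\
    (forall a b (f g : hom C a b), heq (fhom F f) (fhom F g) -> heq f g) /\
    (forall a b (h : hom D (fob F a) (fob F b)), exists f : hom C a b, heq (fhom F f) h).

Section Free.
Variables (P G : Type) (src tgt : G -> list P).

Inductive term : Type :=
| tId  (X : list P)
| tSym (X Y : list P)
| tGen (u : G)
| tComp (f g : term)          (* f ; g  (diagrammatic order) *)
| tTens (f g : term).

Fixpoint tdom (t : term) : list P :=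
  match t with
  | tId X => X | tSym X Y => X ++ Y | tGen u => src u
  | tComp f _ => tdom f | tTens f g => tdom f ++ tdom g end.

Fixpoint tcod (t : term) : list P :=
  match t with
  | tId X => X | tSym X Y => Y ++ X | tGen u => tgt u
  | tComp _ g => tcod g | tTens f g => tcod f ++ tcod g end.

Fixpoint wf (t : term) : Prop :=
  match t with
  | tComp f g => wf f /\ wf g /\ tcod f = tdom g
  | tTens f g => wf f /\ wf g
  | _ => True end.

Inductive ax : term -> term -> Prop :=
| ax_idl f : ax (tComp (tId (tdom f)) f) f
| ax_idr f : ax (tComp f (tId (tcod f))) f
| ax_assoc f g h : ax (tComp (tComp f g) h) (tComp f (tComp g h))
| ax_tens_id X Y : ax (tTens (tId X) (tId Y)) (tId (X ++ Y))
| ax_interchange f g f' g' :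
    ax (tTens (tComp f g) (tComp f' g')) (tComp (tTens f f') (tTens g g'))
| ax_tens_assoc f g h : ax (tTens (tTens f g) h) (tTens f (tTens g h))
| ax_unitl f : ax (tTens (tId []) f) f
| ax_unitr f : ax (tTens f (tId [])) f
| ax_sym_nat f g :
    ax (tComp (tTens f g) (tSym (tcod f) (tcod g)))
       (tComp (tSym (tdom f) (tdom g)) (tTens g f))
| ax_sym_inv X Y : ax (tComp (tSym X Y) (tSym Y X)) (tId (X ++ Y))
| ax_hex1 X Y Z :
    ax (tSym X (Y ++ Z)) (tComp (tTens (tSym X Y) (tId Z)) (tTens (tId Y) (tSym X Z)))
| ax_hex2 X Y Z :
    ax (tSym (X ++ Y) Z) (tComp (tTens (tId X) (tSym Y Z)) (tTens (tSym X Z) (tId Y)))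
| ax_sym_unitl X : ax (tSym [] X) (tId X)
| ax_sym_unitr X : ax (tSym X []) (tId X).

Inductive eqv : term -> term -> Prop :=
| eqv_refl f : wf f -> eqv f f
| eqv_sym f g : eqv f g -> eqv g f
| eqv_trans f g h : eqv f g -> eqv g h -> eqv f h
| eqv_ax l r : ax l r -> wf l -> wf r -> tdom l = tdom r -> tcod l = tcod r -> eqv l r
| eqv_comp f f' g g' : eqv f f' -> eqv g g' ->
    wf (tComp f g) -> wf (tComp f' g') -> eqv (tComp f g) (tComp f' g')
| eqv_tens f f' g g' : eqv f f' -> eqv g g' -> eqv (tTens f g) (tTens f' g').

Lemma eqv_wf f g : eqv f g -> wf f /\ wf g.
Proof. induction 1; simpl in *; intuition. Qed.

Lemma eqv_dc f g : eqv f g -> tdom f = tdom g /\ tcod f = tcod g.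
Proof.
  induction 1; simpl in *; intuition congruence.
Qed.

Definition Hom (X Y : list P) := { f : term | wf f /\ tdom f = X /\ tcod f = Y }.

Lemma comp_ok X Y Z (f : Hom X Y) (g : Hom Y Z) :
  wf (tComp (proj1_sig f) (proj1_sig g)) /\
  tdom (tComp (proj1_sig f) (proj1_sig g)) = X /\
  tcod (tComp (proj1_sig f) (proj1_sig g)) = Z.
Proof.
  destruct f as [f [? [? ?]]], g as [g [? [? ?]]]; simpl; subst; intuition.
Qed.

Definition FreeCat : PreCat := {|
  ob := list P;
  hom := Hom;
  heq := fun _ _ f g => eqv (proj1_sig f) (proj1_sig g);
  idm := fun X => exist _ (tId X) (conj I (conj eq_refl eq_refl));
  cmp := fun X Y Z f g => exist _ (tComp (proj1_sig f) (proj1_sig g)) (comp_ok f g) |}.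

End Free.

(* Petri nets: s(u), t(u) given by their chosen orderings su, tu. *)

Record PetriNet := {
  place : Type;
  trans : Type;
  pre  : trans -> list place;
  post : trans -> list place }.

Fixpoint interleave {A} (l m : list A) : list A :=
  match l, m with
  | a :: l', b :: m' => a :: b :: interleave l' m'
  | [], _ => m
  | _, [] => l
  end.

Section Net.
Variable N : PetriNet.

Definition FN : PreCat := FreeCat (@pre N) (@post N).

(* F_B(N): object generators inl A = ->A, inr A = <-A ;
   u : (x)_i (->A_i (x) <-B_i)  -->  (x)_i (<-A_i (x) ->B_i) *)
Definition bsrc (u : trans N) : list (place N + place N) :=
  interleave (map inl (pre N u)) (map inr (post N u)).
Definition btgt (u : trans N) : list (place N + place N) :=
  interleave (map inr (pre N u)) (map inl (post N u)).
Definition FBN : PreCat := FreeCat bsrc btgt.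

Fixpoint epsObj (x : list (place N + place N)) : list (place N) :=
  match x with
  | [] => []
  | inl a :: x' => a :: epsObj x'
  | inr _ :: x' => epsObj x'
  end.

Fixpoint epsT (t : term (place N + place N) (trans N)) : term (place N) (trans N) :=
  match t with
  | tId _ X => tId _ (epsObj X)
  | tSym _ X Y => tSym _ (epsObj X) (epsObj Y)
  | tGen _ u => tGen _ u
  | tComp f g => tComp (epsT f) (epsT g)
  | tTens f g => tTens (epsT f) (epsT g)
  end.

(* N^# = Gamma eps_N : on objects X |-> {x | eps x = X};
   on f : X -> Y the span with tip {g in F_B(N) | eps g = f}, legs dom, cod. *)
Definition NsharpOb (X : list (place N)) := { x : list (place N + place N) | epsObj x = X }.
Definition NsharpTip (X Y : list (place N)) (f : hom FN X Y) :=
  { g : term (place N + place N) (trans N) |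
      wf bsrc btgt g /\ eqv (@pre N) (@post N) (epsT g) (proj1_sig f) }.
Definition leg_dom X Y (f : hom FN X Y) (s : NsharpTip f) := tdom bsrc (proj1_sig s).
Definition leg_cod X Y (f : hom FN X Y) (s : NsharpTip f) := tcod btgt (proj1_sig s).

Record IObj := { iX : list (place N); ix : NsharpOb iX }.

Record IHom (a b : IObj) := {
  ih_f : hom FN (iX a) (iX b);
  ih_s : NsharpTip ih_f;
  ih_dom : leg_dom ih_s = proj1_sig (ix a);
  ih_cod : leg_cod ih_s = proj1_sig (ix b) }.

Definition IHeq a b (h k : IHom a b) : Prop :=
  heq (ih_f h) (ih_f k) /\
  eqv bsrc btgt (proj1_sig (ih_s h)) (proj1_sig (ih_s k)).

Lemma Iid_tip (a : IObj) :
  wf bsrc btgt (tId _ (proj1_sig (ix a))) /\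
  eqv (@pre N) (@post N) (epsT (tId _ (proj1_sig (ix a)))) (proj1_sig (@idm FN (iX a))).
Proof.
  destruct a as [X [x e]]; simpl; subst; split; [exact I|]; apply eqv_refl; exact I.
Qed.

Definition Iid (a : IObj) : IHom a a :=
  {| ih_f := @idm FN (iX a); ih_s := exist _ _ (Iid_tip a);
     ih_dom := eq_refl; ih_cod := eq_refl |}.

Lemma Icmp_tip a b c (h : IHom a b) (k : IHom b c) :
  wf bsrc btgt (tComp (proj1_sig (ih_s h)) (proj1_sig (ih_s k))) /\
  eqv (@pre N) (@post N) (epsT (tComp (proj1_sig (ih_s h)) (proj1_sig (ih_s k))))
      (proj1_sig (@cmp FN _ _ _ (ih_f h) (ih_f k))).
Proof.
  destruct h as [f [s [ws es]] ds cs], k as [g [t [wt et]] dt ct];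
  unfold leg_dom, leg_cod in *; simpl in *.
  destruct f as [f [wf1 [df cf]]], g as [g [wg [dg cg]]]; simpl in *.
  split.
  - repeat split; auto. congruence.
  - apply eqv_comp; auto.
    + destruct (eqv_wf es), (eqv_wf et), (eqv_dc es), (eqv_dc et).
      simpl; repeat split; auto. congruence.
    + simpl; repeat split; auto. congruence.
Qed.

Lemma Icmp_dom a b c (h : IHom a b) (k : IHom b c) :
  tdom bsrc (tComp (proj1_sig (ih_s h)) (proj1_sig (ih_s k))) = proj1_sig (ix a).
Proof. exact (ih_dom h). Qed.
Lemma Icmp_cod a b c (h : IHom a b) (k : IHom b c) :
  tcod btgt (tComp (proj1_sig (ih_s h)) (proj1_sig (ih_s k))) = proj1_sig (ix c).
Proof. exact (ih_cod k). Qed.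

Definition Icmp a b c (h : IHom a b) (k : IHom b c) : IHom a c :=
  {| ih_f := @cmp FN _ _ _ (ih_f h) (ih_f k); ih_s := exist _ _ (Icmp_tip h k);
     ih_dom := Icmp_dom h k; ih_cod := Icmp_cod h k |}.

Definition IntNsharp : PreCat := {|
  ob := IObj; hom := IHom; heq := IHeq; idm := Iid; cmp := Icmp |}.

End Net.

(* εN is a strict symmetric monoidal functor given on generators, so on
   presenting terms it preserves domains, codomains, well-formedness and every axiom
   instance, hence the congruence.  This makes x ↦ (εx, x), g ↦ (εg, g) a functor
   F_B(N) → ∫N♯.  Its second component is the identity of F_B(N): an object (X, x) of
   ∫N♯ is determined by x (as X = εx), and a morphism (f, σ) is the image of σ itself,
   with εσ ≡ f by definition of the tip of N♯ f.  So it is bijective on objects, full,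
   and faithful, because equality in ∫N♯ includes equality of the tips in F_B(N). *)
From Stdlib Require Import List.
Import ListNotations.
Set Implicit Arguments.

Section Comparison.
Variable N : PetriNet.

Lemma epsObj_app (x y : list (place N + place N)) :
  epsObj N (x ++ y) = epsObj N x ++ epsObj N y.
Proof. induction x as [|[a|a] x IH]; simpl; rewrite ?IH; reflexivity. Qed.

Lemma epsObj_map_inl (l : list (place N)) : epsObj N (map inl l) = l.
Proof. induction l as [|a l IH]; simpl; rewrite ?IH; reflexivity. Qed.

Lemma epsObj_map_inr (l : list (place N)) : epsObj N (map inr l) = [].
Proof. induction l as [|a l IH]; simpl; auto. Qed.

Lemma epsObj_interleave_inl_inr (l m : list (place N)) :
  epsObj N (interleave (map inl l) (map inr m)) = l.
Proof.
  revert m; induction l as [|a l IH]; intros [|b m]; simpl;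
    rewrite ?epsObj_map_inr, ?epsObj_map_inl, ?IH; reflexivity.
Qed.

Lemma epsObj_interleave_inr_inl (l m : list (place N)) :
  epsObj N (interleave (map inr l) (map inl m)) = m.
Proof.
  revert m; induction l as [|a l IH]; intros [|b m]; simpl;
    rewrite ?epsObj_map_inr, ?epsObj_map_inl, ?IH; reflexivity.
Qed.

Lemma tdom_epsT t : tdom (@pre N) (epsT N t) = epsObj N (tdom (bsrc N) t).
Proof.
  induction t; simpl; rewrite ?epsObj_app, ?IHt1, ?IHt2; try reflexivity.
  unfold bsrc; rewrite epsObj_interleave_inl_inr; reflexivity.
Qed.

Lemma tcod_epsT t : tcod (@post N) (epsT N t) = epsObj N (tcod (btgt N) t).
Proof.
  induction t; simpl; rewrite ?epsObj_app, ?IHt1, ?IHt2; try reflexivity.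
  unfold btgt; rewrite epsObj_interleave_inr_inl; reflexivity.
Qed.

Lemma wf_epsT t : wf (bsrc N) (btgt N) t -> wf (@pre N) (@post N) (epsT N t).
Proof.
  induction t; simpl; intuition.
  rewrite tcod_epsT, tdom_epsT; congruence.
Qed.

Lemma ax_epsT l r :
  ax (bsrc N) (btgt N) l r -> ax (@pre N) (@post N) (epsT N l) (epsT N r).
Proof.
  destruct 1; simpl; rewrite ?epsObj_app; try constructor;
    rewrite <- ?tdom_epsT, <- ?tcod_epsT; constructor.
Qed.

Lemma eqv_epsT f g :
  eqv (bsrc N) (btgt N) f g -> eqv (@pre N) (@post N) (epsT N f) (epsT N g).
Proof.
  induction 1.
  - apply eqv_refl, wf_epsT; assumption.
  - apply eqv_sym; assumption.
  - eapply eqv_trans; eassumption.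
  - apply eqv_ax; auto using ax_epsT, wf_epsT.
    + rewrite !tdom_epsT; congruence.
    + rewrite !tcod_epsT; congruence.
  - apply eqv_comp; auto; apply (wf_epsT (tComp _ _)); assumption.
  - apply eqv_tens; assumption.
Qed.

Lemma epsT_hom_spec x y (g : hom (FBN N) x y) :
  wf (@pre N) (@post N) (epsT N (proj1_sig g)) /\
  tdom (@pre N) (epsT N (proj1_sig g)) = epsObj N x /\
  tcod (@post N) (epsT N (proj1_sig g)) = epsObj N y.
Proof.
  destruct g as [g [Hwf [Hdom Hcod]]]; simpl.
  rewrite tdom_epsT, tcod_epsT, Hdom, Hcod; auto using wf_epsT.
Qed.

Definition epsT_hom x y (g : hom (FBN N) x y) : hom (FN N) (epsObj N x) (epsObj N y) :=
  exist _ (epsT N (proj1_sig g)) (epsT_hom_spec g).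

Lemma tip_of_hom_spec x y (g : hom (FBN N) x y) :
  wf (bsrc N) (btgt N) (proj1_sig g) /\
  eqv (@pre N) (@post N) (epsT N (proj1_sig g)) (proj1_sig (epsT_hom g)).
Proof. split; [exact (proj1 (proj2_sig g)) | apply eqv_refl, (epsT_hom_spec g)]. Qed.

Definition tip_of_hom x y (g : hom (FBN N) x y) : NsharpTip (epsT_hom g) :=
  exist _ (proj1_sig g) (tip_of_hom_spec g).

Definition comparison_ob (x : list (place N + place N)) : IObj N :=
  {| iX := epsObj N x; ix := exist _ x eq_refl |}.

Definition comparison_hom x y (g : hom (FBN N) x y) :
    IHom (comparison_ob x) (comparison_ob y) :=
  @Build_IHom N (comparison_ob x) (comparison_ob y) (epsT_hom g) (tip_of_hom g)
    (proj1 (proj2 (proj2_sig g))) (proj2 (proj2 (proj2_sig g))).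

Definition comparison : Functor (FBN N) (IntNsharp N).
Proof.
  refine (@Build_Functor (FBN N) (IntNsharp N) comparison_ob comparison_hom _ _ _).
  - intros x y f g Hfg; split; [apply eqv_epsT|]; exact Hfg.
  - intros x; split; apply eqv_refl; exact I.
  - intros x y z f g; destruct (comp_ok f g) as [Hwf _].
    split; apply eqv_refl; [apply (wf_epsT (tComp _ _))|]; exact Hwf.
Defined.

Lemma comparison_ob_bij (a : IObj N) : exists! x, fob comparison x = a.
Proof.
  destruct a as [X [x Hx]]; subst X.
  exists x; split; [reflexivity|].
  intros x' Hx'; symmetry; exact (f_equal (fun a : IObj N => proj1_sig (ix a)) Hx').
Qed.

Lemma comparison_faithful x y (f g : hom (FBN N) x y) :
  heq (fhom comparison f) (fhom comparison g) -> heq f g.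
Proof. intros [_ Hfg]; exact Hfg. Qed.

Lemma comparison_full x y (h : hom (IntNsharp N) (fob comparison x) (fob comparison y)) :
  exists g : hom (FBN N) x y, heq (fhom comparison g) h.
Proof.
  destruct h as [f [s [Hwf Heps]] Hdom Hcod]; unfold leg_dom, leg_cod in *; simpl in *.
  exists (exist _ s (conj Hwf (conj Hdom Hcod))).
  split; [exact Heps | apply eqv_refl; exact Hwf].
Qed.

End Comparison.

Theorem theorem26 (N : PetriNet) : CatIso (FBN N) (IntNsharp N).
Proof.
  exists (comparison N).
  split; [exact (@comparison_ob_bij N)|].
  split; [exact (@comparison_faithful N) | exact (@comparison_full N)].
Qed.
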